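(* Let $H$ be a vertically connected matroid and $Y\subseteq E(H)$. Suppose that $\{A,B\}$ is a vertical $2$-separation of $H$ with $A$ minimal (under inclusion) among sides of vertical $2$-separations of $H$ that contain $Y$. Then $(A-Y)\cap \mathrm{cl}_H(B)=\emptyset$. Moreover, if $x\in (A-Y)\cap \mathrm{cl}^*_H(B)$, then $r_H(A)=2$ and $x$ is a coloop of $H|A$.
   Context: For a matroid $H$ and $A\subseteq E(H)$, $\lambda_H(A)=r_H(A)+r_H(E(H)-A)-r(H)$. A partition $\{A,B\}$ of $E(H)$ is a vertical $k$-separation if $\lambda_H(A)\le k-1$ and $r_H(A),r_H(B)\ge k$. $H$ is vertically connected if it has no vertical $1$-separation, and vertically $3$-connected if it has no vertical $1$- or $2$-separation. $\mathrm{cl}^*_H$ is the closure operator of the dual $H^*$. *)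

From mathcomp Require Import all_boot.
Set Implicit Arguments. Unset Strict Implicit. Unset Printing Implicit Defensive.

(* A matroid H whose ground set E(H) is the whole finite type T,
   given by its rank function satisfying the rank axioms (R1)-(R3). *)
Record matroid (T : finType) := Matroid {
  rk : {set T} -> nat;
  rk_le_card : forall X : {set T}, rk X <= #|X|;
  rk_mono : forall X Y : {set T}, X \subset Y -> rk X <= rk Y;
  rk_submod : forall X Y : {set T}, rk (X :|: Y) + rk (X :&: Y) <= rk X + rk Y
}.

Section Matroids.
Variable T : finType.
Implicit Types (M : matroid T) (X A B Y : {set T}) (x : T).

Definition rank_of M := rk M [set: T].

Definition cl_of (r : {set T} -> nat) X : {set T} := [set x | r (x |: X) == r X].

Definition cl M X := cl_of (rk M) X.

Definition dual_rk M X := #|X| + rk M (~: X) - rank_of M.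

Definition cl_dual M X := cl_of (dual_rk M) X.

(* connectivity function lambda_H(A) = r(A) + r(E - A) - r(H)
   (never truncated, by submodularity) *)
Definition lambda M A := rk M A + rk M (~: A) - rank_of M.

Definition vert_sep M (k : nat) A B :=
  [/\ B = ~: A, lambda M A <= k.-1, k <= rk M A & k <= rk M B].

Definition vert_connected M := forall A B, ~ vert_sep M 1 A B.

Definition coloop_restr M A x := x \in A /\ rk M (A :\ x) < rk M A.

End Matroids.

From mathcomp Require Import all_boot.
From mathcomp Require Import zify.

(* Moving an element x of A - Y across a vertical 2-separation {A, B} does not
   raise the connectivity when r(B + x) - r(B) <= r(A) - r(A - x), which holds
   both for x in cl(B) and for x in cl*(B) (there x is a coloop of H|A).  Then
   {A - x, B + x} is again a vertical 2-separation unless r(A - x) <= 1, so the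
   minimality of A forces r(A - x) <= 1.  For x in cl(B) this makes {A - x, B + x}
   a vertical 1-separation, which is impossible; for x in cl*(B) it gives
   r(A) = 2. *)

Section RankFacts.
Context {T : finType}.
Implicit Types (M : matroid T) (X A : {set T}) (x : T).

Lemma rk_set0 M : rk M set0 = 0.
Proof. by have := rk_le_card M set0; rewrite cards0; lia. Qed.

Lemma rk_setU1_le M x X : rk M (x |: X) <= (rk M X).+1.
Proof.
have := rk_submod M [set x] X; have := rk_le_card M [set x].
by rewrite cards1; lia.
Qed.

Lemma rk_setD1_ge M X x : x \in X -> rk M X <= (rk M (X :\ x)).+1.
Proof. by move=> xX; have := rk_setU1_le M x (X :\ x); rewrite setD1K. Qed.

Lemma rank_of_le_compl M X : rank_of M <= rk M X + rk M (~: X).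
Proof.
by have := rk_submod M X (~: X); rewrite setUCr setICr rk_set0 /rank_of; lia.
Qed.

Lemma setCD1 x A : x \in A -> ~: (A :\ x) = x |: ~: A.
Proof.
by move=> xA; apply/setP=> y; rewrite !inE; case: eqVneq => [->|].
Qed.

Lemma lambda_setD1 M A x : x \in A ->
  lambda M (A :\ x) + rk M A + rk M (~: A) =
  lambda M A + rk M (A :\ x) + rk M (x |: ~: A).
Proof.
move=> xA; rewrite /lambda setCD1 //.
have := rank_of_le_compl M A; have := rank_of_le_compl M (A :\ x).
by rewrite setCD1 //; lia.
Qed.

Lemma cl_dualE M X x : x \notin X ->
  (x \in cl_dual M X) = (rk M (~: X :\ x) < rk M (~: X)).
Proof.
move=> xX; have xCX : x \in ~: X by rewrite inE.
have CU1 : ~: (x |: X) = ~: X :\ x by rewrite -(setCK X) -setCD1 ?setCK.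
rewrite inE /dual_rk cardsU1 xX CU1.
have := rank_of_le_compl M X; have := rk_le_card M X.
have := rk_setD1_ge M _ _ xCX; have := rk_mono M (subD1set (~: X) x).
by case: ltnP; lia.
Qed.

Lemma vert_sep_setD1 M k A x : x \in A -> vert_sep M k A (~: A) ->
  k <= rk M (A :\ x) ->
  rk M (x |: ~: A) + rk M (A :\ x) <= rk M (~: A) + rk M A ->
  vert_sep M k (A :\ x) (x |: ~: A).
Proof.
move=> xA [_ lamA _ kCA] kAx moveA; split=> //; first by rewrite setCD1.
  by have := lambda_setD1 M A x xA; lia.
exact: leq_trans kCA (rk_mono _ (subsetUr _ _)).
Qed.

End RankFacts.

Section MinimalVerticalSeparation.
Variables (T : finType) (M : matroid T) (Y A B : {set T}).
Hypothesis sepAB : vert_sep M 2 A B.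
Hypothesis sYA : Y \subset A.
Hypothesis minA : forall A' B', vert_sep M 2 A' B' -> Y \subset A' ->
  A' \subset A -> A' = A.

Let defB : B = ~: A. Proof. by case: sepAB. Qed.

Lemma rk_setD1_lt2 x : x \in A :\: Y ->
  rk M (x |: B) + rk M (A :\ x) <= rk M B + rk M A -> rk M (A :\ x) < 2.
Proof.
rewrite inE => /andP[xNY xA] moveA; rewrite ltnNge; apply/negP => rkAx.
have sepAx : vert_sep M 2 (A :\ x) (x |: B).
  by move: moveA; rewrite defB; apply: vert_sep_setD1 => //; rewrite -defB.
have sYAx : Y \subset A :\ x by rewrite subsetD1 sYA.
by move: xA; rewrite -(minA _ _ sepAx sYAx (subD1set A x)) setD11.
Qed.

Lemma minimal_sep_cl_disjoint : vert_connected M ->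
  (A :\: Y) :&: cl M B = set0.
Proof.
move=> vcM; apply/setP=> x; rewrite in_set0; apply/negP => /setIP[xAY].
rewrite inE => /eqP clx; have [xA _] := setDP xAY.
have [_ lamA rkA rkB] := sepAB.
have rkAx : rk M (A :\ x) < 2.
  apply: rk_setD1_lt2 => //; rewrite clx leq_add2l.
  exact/rk_mono/subD1set.
have rkA_Ax := rk_setD1_ge M A x xA.
have rkBx := rk_mono M (subsetUr [set x] B).
apply: (vcM (A :\ x) (x |: B)); split.
- by rewrite defB setCD1.
- by have := lambda_setD1 M A x xA; rewrite -defB clx; lia.
- lia.
- lia.
Qed.

Lemma minimal_sep_cl_dual x : x \in (A :\: Y) :&: cl_dual M B ->
  rk M A = 2 /\ coloop_restr M A x.
Proof.
case/setIP=> xAY; have [xA _] := setDP xAY.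
rewrite cl_dualE; last by rewrite defB inE xA.
rewrite defB setCK => coloop_x; have [_ _ rkA _] := sepAB.
have rkAx : rk M (A :\ x) < 2.
  apply: rk_setD1_lt2 => //; have := rk_setU1_le M x B; lia.
by have := rk_setD1_ge M A x xA; split; [lia | split].
Qed.

End MinimalVerticalSeparation.

Theorem lemma3p2 (T : finType) (H : matroid T) (Y A B : {set T}) :
  vert_connected H ->
  vert_sep H 2 A B ->
  Y \subset A ->
  (forall A' B' : {set T}, vert_sep H 2 A' B' -> Y \subset A' ->
     A' \subset A -> A' = A) ->
  ((A :\: Y) :&: cl H B = set0) /\
  (forall x, x \in (A :\: Y) :&: cl_dual H B ->
     rk H A = 2 /\ coloop_restr H A x).
Proof.
move=> vcH sepAB sYA minA.
by split; [exact: minimal_sep_cl_disjoint | exact: minimal_sep_cl_dual].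
Qed.
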